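(* Let $n$ be a positive integer. Call a function $C:[n]^3\to\mathbb{Z}_{\ge 0}$ an SBC$(n)$ if its $3n^2$ line sums (the sums $\sum_{i} C(i,j,k)$ for fixed $(j,k)$, $\sum_{j} C(i,j,k)$ for fixed $(i,k)$, and $\sum_{k} C(i,j,k)$ for fixed $(i,j)$) are exactly the integers $0,1,\dots,3n^2-1$, each occurring once. If there exists an SBC$(n)$, then there exists an SBC$(mn)$ for every positive integer $m$.
   Context: $[n]=\{1,2,\dots,n\}$; indices in the line sums range over $[n]$. *)

From mathcomp Require Import all_boot.
Set Implicit Arguments. Unset Strict Implicit. Unset Printing Implicit Defensive.

(* A cube C : [n]^3 -> Z_{>=0}, with indices 0..n-1 (ordinals) standing for 1..n. *)
Definition cube (n : nat) := 'I_n -> 'I_n -> 'I_n -> nat.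

Definition line_sums (n : nat) (C : cube n) : seq nat :=
  [seq \sum_(i < n) C i jk.1 jk.2 | jk : 'I_n * 'I_n] ++
  [seq \sum_(j < n) C ik.1 j ik.2 | ik : 'I_n * 'I_n] ++
  [seq \sum_(k < n) C ij.1 ij.2 k | ij : 'I_n * 'I_n].

Definition SBC (n : nat) (C : cube n) : Prop :=
  perm_eq (line_sums C) (iota 0 (3 * n ^ 2)).

(* Write an index of [mn] as n a + i with block a < m and residue i < n.  The
   blown-up cube vanishes on block (a, b, c) unless a + b + c = 0 (mod m), and
   there it is m^2 C plus the block label m b + c on the cells with
   i + j + k = 0 (mod n).  Each congruence has exactly one solution on every
   line, so a line of the blow-up sums to m^2 L + t, where L is the sum of C
   along the corresponding line inside a block and t is the label of the one
   live block the line crosses.  In each direction the pair (inner line,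
   label) determines the line, so the sums are m^2 {0 .. 3n^2 - 1} +
   {0 .. m^2 - 1} = {0 .. 3(mn)^2 - 1}. *)

From mathcomp Require Import all_boot zify.
Set Implicit Arguments. Unset Strict Implicit. Unset Printing Implicit Defensive.

Lemma allpairs_iota K M :
  [seq M * x + t | x <- iota 0 K, t <- iota 0 M] = iota 0 (K * M).
Proof.
elim: K => [|K IH]; first by rewrite mul0n.
rewrite -addn1 iotaD allpairs_cat IH /= cats0 add0n mulnDl mul1n iotaD add0n.
by rewrite -(addn0 (K * M)) iotaDl mulnC.
Qed.

Lemma perm_allpairs_iota (s : seq nat) N K : perm_eq s (iota 0 N) ->
  perm_eq [seq K * x + t | x <- s, t <- iota 0 K] (iota 0 (N * K)).
Proof.
by move=> eq_s; rewrite -allpairs_iota; apply: perm_allpairs.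
Qed.

Lemma edivn_uniq d q1 r1 q2 r2 : r1 < d -> r2 < d ->
  d * q1 + r1 = d * q2 + r2 -> q1 = q2 /\ r1 = r2.
Proof.
move=> lt1 lt2 eq12; have d_gt0 : 0 < d by case: d lt1 {lt2 eq12}.
have := congr1 (divn^~ d) eq12; have := congr1 (modn^~ d) eq12.
rewrite ![d * _]mulnC !modnMDl !divnMDl // !modn_small // !divn_small // !addn0.
by move=> -> ->.
Qed.

Lemma ord_divn_modn_inj N d (u v : 'I_N) : u %/ d = v %/ d -> u = v %[mod d] -> u = v.
Proof.
by move=> eq_div eq_mod; apply: val_inj; rewrite /= (divn_eq u d) eq_div eq_mod -divn_eq.
Qed.

Lemma perm_map_digits (T Q : finType) K (F : Q -> nat) (pi : T -> Q) (tau : T -> nat) :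
  (forall p, tau p < K) -> injective (fun p => (pi p, tau p)) -> #|Q| * K <= #|T| ->
  perm_eq [seq K * F (pi p) + tau p | p : T]
          [seq K * x + t | x <- [seq F q | q : Q], t <- iota 0 K].
Proof.
move=> tau_lt inj_pi_tau cardT.
pose h (p : T) : (Q * 'I_K)%type := (pi p, Ordinal (tau_lt p)).
have inj_h : injective h by move=> p1 p2 [e1 e2]; apply: inj_pi_tau; rewrite /= e1 e2.
rewrite allpairs_mapl -val_enum_ord allpairs_mapr.
rewrite -(map_allpairs (fun u : Q * 'I_K => K * F u.1 + u.2) (fun x y => (x, y))).
rewrite (_ : [seq _ | p : T] = map (fun u : Q * 'I_K => K * F u.1 + u.2) (map h (enum T)));
  last by rewrite -map_comp.
apply: perm_map; apply: uniq_perm.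
- by rewrite map_inj_uniq // enum_uniq.
- by apply: allpairs_uniq; rewrite ?enum_uniq // => [[? ?] [? ?] _ _ [-> ->]].
- move=> [q t]; rewrite (allpairs_f (fun x y => (x, y))) ?mem_enum // -codomE.
  by apply: inj_card_onto; rewrite // card_prod card_ord.
Qed.

Lemma sum_ord_mul m n (F : nat -> nat) :
  \sum_(x < m * n) F x = \sum_(a < m) \sum_(i < n) F (a * n + i).
Proof.
elim: m => [|m IH]; first by rewrite mul0n !big_ord0.
by rewrite mulSnr big_split_ord IH big_ord_recr.
Qed.

Definition oppm m s := (m - s %% m) %% m.

Lemma oppm_lt m s : 0 < m -> oppm m s < m.
Proof. exact: ltn_pmod. Qed.

Lemma oppmP m s a : a < m -> ((a + s) %% m == 0) = (a == oppm m s).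
Proof.
move=> lt_am; have m_gt0 : 0 < m by case: m lt_am.
have opp_s : (oppm m s + s) %% m = 0.
  by rewrite modnDml -modnDmr subnK ?modnn // ltnW ?ltn_pmod.
by rewrite -{1}opp_s eqn_modDr !modn_small ?oppm_lt.
Qed.

Lemma oppm_inj m s a1 a2 : a1 < m -> a2 < m ->
  oppm m (a1 + s) = oppm m (a2 + s) -> a1 = a2.
Proof.
move=> lt1 lt2 eq12; have m_gt0 : 0 < m by case: m lt1 {lt2 eq12}.
suff oppmK a : a < m -> a = oppm m (oppm m (a + s) + s).
  by rewrite (oppmK a1) // eq12 -oppmK.
by move=> lt_am; apply/eqP; rewrite -oppmP // addnCA oppmP ?oppm_lt.
Qed.

Section Blowup.

Variables (m n : nat) (m_gt0 : 0 < m) (n_gt0 : 0 < n) (C : cube n).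

Definition ord_mod (x : nat) : 'I_n := Ordinal (ltn_pmod x n_gt0).

Lemma ord_mod_block a (i : 'I_n) : ord_mod (a * n + i) = i.
Proof. by apply: val_inj; rewrite /= modnMDl modn_small. Qed.

Lemma divn_block a (i : 'I_n) : (a * n + i) %/ n = a.
Proof. by rewrite divnMDl // divn_small ?addn0. Qed.

Definition blowup (x y z : nat) : nat :=
  if (x %/ n + y %/ n + z %/ n) %% m == 0 then
    m ^ 2 * C (ord_mod x) (ord_mod y) (ord_mod z) +
    (if (ord_mod x + ord_mod y + ord_mod z) %% n == 0 then m * (y %/ n) + z %/ n else 0)
  else 0.

Lemma sum_one_block (F : nat -> nat) a0 i0 W (G : 'I_n -> nat) V : a0 < m -> i0 < n ->
  (forall a (i : 'I_n), a < m -> F (a * n + i) =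
     if a == a0 then W * G i + (if i == i0 :> nat then V else 0) else 0) ->
  \sum_(x < m * n) F x = W * \sum_(i < n) G i + V.
Proof.
move=> lt_a0 lt_i0 F_block; rewrite sum_ord_mul exchange_big /=.
under eq_bigr => i _ do rewrite (eq_bigr _ (fun (a : 'I_m) _ => F_block a i (ltn_ord a)))
  -big_mkcond (big_ord1_eq _ (fun=> _)) lt_a0.
by rewrite big_split -big_distrr /= -big_mkcond (big_ord1_eq _ (fun=> _)) lt_i0.
Qed.

Lemma sum_blowup1 (y z : nat) :
  \sum_(x < m * n) blowup x y z =
  m ^ 2 * \sum_(i < n) C i (ord_mod y) (ord_mod z) + (m * (y %/ n) + z %/ n).
Proof.
apply: (sum_one_block (F := fun x => blowup x y z)
  (oppm_lt (y %/ n + z %/ n) m_gt0) (oppm_lt (ord_mod y + ord_mod z) n_gt0)).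
by move=> a i lt_am; rewrite /blowup divn_block ord_mod_block -!addnA !oppmP.
Qed.

Lemma sum_blowup2 (x z : nat) :
  \sum_(y < m * n) blowup x y z =
  m ^ 2 * \sum_(j < n) C (ord_mod x) j (ord_mod z) + (m * oppm m (x %/ n + z %/ n) + z %/ n).
Proof.
apply: (sum_one_block (F := fun y => blowup x y z)
  (oppm_lt (x %/ n + z %/ n) m_gt0) (oppm_lt (ord_mod x + ord_mod z) n_gt0)).
move=> b j lt_bm; rewrite /blowup divn_block ord_mod_block.
rewrite [x %/ n + b]addnC [ord_mod x + j]addnC -!addnA !oppmP //.
by case: eqP => // ->.
Qed.

Lemma sum_blowup3 (x y : nat) :
  \sum_(z < m * n) blowup x y z =
  m ^ 2 * \sum_(k < n) C (ord_mod x) (ord_mod y) k + (m * (y %/ n) + oppm m (x %/ n + y %/ n)).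
Proof.
apply: (sum_one_block (F := fun z => blowup x y z)
  (oppm_lt (x %/ n + y %/ n) m_gt0) (oppm_lt (ord_mod x + ord_mod y) n_gt0)).
move=> c k lt_cm; rewrite /blowup divn_block ord_mod_block.
rewrite [_ + c]addnC [_ + k]addnC !oppmP //.
by case: eqP => // ->.
Qed.

Lemma perm_line_sums (L : 'I_n * 'I_n -> nat) (f g : 'I_(m * n) * 'I_(m * n) -> nat) :
  (forall p, f p < m) -> (forall p, g p < m) ->
  (forall p q, f p = f q -> g p = g q -> p.1 %/ n = q.1 %/ n /\ p.2 %/ n = q.2 %/ n) ->
  perm_eq [seq m ^ 2 * L (ord_mod p.1, ord_mod p.2) + (m * f p + g p)
             | p : 'I_(m * n) * 'I_(m * n)]
          [seq m ^ 2 * s + t | s <- [seq L q | q : 'I_n * 'I_n], t <- iota 0 (m ^ 2)].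
Proof.
move=> f_lt g_lt fg_inj.
apply: (@perm_map_digits _ _ _ L
  (fun p : 'I_(m * n) * 'I_(m * n) => (ord_mod p.1, ord_mod p.2))) => [p | [x1 y1] [x2 y2] | ].
- by have := f_lt p; have := g_lt p; nia.
- case=> eq_x eq_y /(edivn_uniq (g_lt _) (g_lt _)) [eq_f eq_g].
  have [/= eq_x' eq_y'] := fg_inj _ _ eq_f eq_g.
  by rewrite (ord_divn_modn_inj eq_x' eq_x) (ord_divn_modn_inj eq_y' eq_y).
- by rewrite !card_prod !card_ord; nia.
Qed.

Lemma blowup_SBC : SBC C -> SBC (fun x y z : 'I_(m * n) => blowup x y z).
Proof.
move=> sbc_C; have lt_div (x : 'I_(m * n)) : x %/ n < m by rewrite ltn_divLR // ltn_ord.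
rewrite /SBC /line_sums /=.
rewrite (eq_image (frefl _) (fun p : 'I_(m * n) * 'I_(m * n) => sum_blowup1 p.1 p.2)).
rewrite (eq_image (frefl _) (fun p : 'I_(m * n) * 'I_(m * n) => sum_blowup2 p.1 p.2)).
rewrite (eq_image (frefl _) (fun p : 'I_(m * n) * 'I_(m * n) => sum_blowup3 p.1 p.2)).
have opp_lt (p : 'I_(m * n) * 'I_(m * n)) : oppm m (p.1 %/ n + p.2 %/ n) < m.
  exact: oppm_lt.
apply: perm_trans (perm_cat
  (perm_line_sums (fun q => \sum_(i < n) C i q.1 q.2)
     (fun p => lt_div p.1) (fun p => lt_div p.2) (fun _ _ => @conj _ _)) (perm_cat
  (perm_line_sums (fun q => \sum_(j < n) C q.1 j q.2) opp_lt (fun p => lt_div p.2) _)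
  (perm_line_sums (fun q => \sum_(k < n) C q.1 q.2 k) (fun p => lt_div p.2) opp_lt _))) _.
- move=> [x1 z1] [x2 z2] /= + eq_z; rewrite eq_z.
  by move=> /(oppm_inj (lt_div _) (lt_div _)).
- move=> [x1 y1] [x2 y2] /= eq_y; rewrite eq_y.
  by move=> /(oppm_inj (lt_div _) (lt_div _)).
rewrite -!allpairs_cat (_ : 3 * (m * n) ^ 2 = 3 * n ^ 2 * m ^ 2).
  exact: perm_allpairs_iota.
by rewrite expnMn mulnCA mulnC.
Qed.

End Blowup.

Theorem lemma2p1 (n : nat) (hn : 0 < n) :
  (exists C : cube n, SBC C) ->
  forall m : nat, 0 < m -> exists C' : cube (m * n), SBC C'.
Proof.
move=> [C sbc_C] m m_gt0.
by exists (fun x y z => blowup m hn C x y z); apply: blowup_SBC.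
Qed.
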